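(* Let $\{X,F\}$ and $\{Y,F\}$ be compatible pairs of skew invertible operators $X,Y,F\in\mathrm{End}(V\otimes V)$, with $F$ invertible. Then $$F_{12}C_{X,1}C_{Y,2}=C_{Y,1}C_{X,2}F_{12},\qquad F_{12}D_{X,1}D_{Y,2}=D_{Y,1}D_{X,2}F_{12},$$ $$F_{12}(C_XD_Y)_2=(C_XD_Y)_1F_{12},\qquad F_{12}(D_YC_X)_1=(D_YC_X)_2F_{12},$$ $$\mathrm{Tr}_{(1)}(C_{X,1}F_{12}^{-1})=(C_XD_F)_2=(D_FC_X)_2,\qquad \mathrm{Tr}_{(2)}(D_{X,2}F_{12}^{-1})=(C_FD_X)_1=(D_XC_F)_1 .$$
   Context: $V$ is a complex vector space of dimension $N$ with a fixed basis. For $X\in\mathrm{End}(V\otimes V)$ and $m<r$, $X_{mr}$ denotes the operator on $V^{\otimes n}$ acting as $X$ on tensor factors $m,r$ and as the identity elsewhere, $X_m:=X_{m,m+1}$; for $Y\in\mathrm{End}(V)$, $Y_m$ acts as $Y$ on factor $m$. $P$ is the flip $u\otimes v\mapsto v\otimes u$; $\mathrm{Tr}_{(i)}$ is partial trace over factor $i$. $X$ is skew invertible if there is $\Psi_X\in\mathrm{End}(V\otimes V)$ with $\mathrm{Tr}_{(2)}X_{12}\Psi_{X,23}=\mathrm{Tr}_{(2)}\Psi_{X,12}X_{23}=P_{13}$; then $C_X:=\mathrm{Tr}_{(1)}\Psi_{X,12}$, $D_X:=\mathrm{Tr}_{(2)}\Psi_{X,12}$. A pair $\{X,F\}$ is compatible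 if $X_1F_2F_1=F_2F_1X_2$ and $X_2F_1F_2=F_1F_2X_1$. *)

(* Operators on V^{(x)k}, V = C^N with fixed basis, are
   represented by their matrices, indexed by k-tuples of basis indices. *)
From HB Require Import structures.
From mathcomp Require Import all_boot all_order all_algebra all_field.
Set Implicit Arguments. Unset Strict Implicit. Unset Printing Implicit Defensive.
Import Order.TTheory GRing.Theory Num.Theory.
Local Open Scope ring_scope.

Definition idx2 (N : nat) : finType := ('I_N * 'I_N)%type.
Definition idx3 (N : nat) : finType := ('I_N * 'I_N * 'I_N)%type.

(* matrix of an operator: A i j = coefficient of basis vector e_i in A e_j *)
Definition Op (I : finType) := I -> I -> algC.

Definition opmul (I : finType) (A B : Op I) : Op I :=
  fun i j => \sum_(k : I) A i k * B k j.
Definition opone (I : finType) : Op I := fun i j => (i == j)%:R.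

Definition flip (N : nat) : Op (idx2 N) :=
  fun i j => ((i.1 == j.2) && (i.2 == j.1))%:R.

Definition on1 (N : nat) (Y : Op 'I_N) : Op (idx2 N) :=
  fun i j => Y i.1 j.1 * (i.2 == j.2)%:R.
Definition on2 (N : nat) (Y : Op 'I_N) : Op (idx2 N) :=
  fun i j => (i.1 == j.1)%:R * Y i.2 j.2.

Definition on12 (N : nat) (X : Op (idx2 N)) : Op (idx3 N) :=
  fun i j => X (i.1.1, i.1.2) (j.1.1, j.1.2) * (i.2 == j.2)%:R.
Definition on23 (N : nat) (X : Op (idx2 N)) : Op (idx3 N) :=
  fun i j => (i.1.1 == j.1.1)%:R * X (i.1.2, i.2) (j.1.2, j.2).

Definition ptr1 (N : nat) (A : Op (idx2 N)) : Op 'I_N :=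
  fun i j => \sum_(a < N) A (a, i) (a, j).
Definition ptr2 (N : nat) (A : Op (idx2 N)) : Op 'I_N :=
  fun i j => \sum_(a < N) A (i, a) (j, a).
Definition ptr2_3 (N : nat) (T : Op (idx3 N)) : Op (idx2 N) :=
  fun i j => \sum_(a < N) T (i.1, a, i.2) (j.1, a, j.2).

Definition skew_inverse (N : nat) (X Psi : Op (idx2 N)) : Prop :=
  ptr2_3 (opmul (on12 X) (on23 Psi)) = @flip N /\
  ptr2_3 (opmul (on12 Psi) (on23 X)) = @flip N.

Definition Cop (N : nat) (Psi : Op (idx2 N)) : Op 'I_N := ptr1 Psi.
Definition Dop (N : nat) (Psi : Op (idx2 N)) : Op 'I_N := ptr2 Psi.

Definition compatible (N : nat) (X F : Op (idx2 N)) : Prop :=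
  opmul (on12 X) (opmul (on23 F) (on12 F)) =
    opmul (on23 F) (opmul (on12 F) (on23 X)) /\
  opmul (on23 X) (opmul (on12 F) (on23 F)) =
    opmul (on12 F) (opmul (on23 F) (on12 X)).

From HB Require Import structures.
From mathcomp Require Import all_boot all_order all_algebra all_field.
From mathcomp Require Import ring.
From Stdlib Require Import FunctionalExtensionality.
Import Order.TTheory GRing.Theory Num.Theory.
Local Open Scope ring_scope.
Set Implicit Arguments. Unset Strict Implicit.

(* For a skew invertible X with C = C_X one has Tr_(1) (C_1 X_12) = 1.
   Compatibility of {X, F} gives F_1 X_2 F_1^-1 = F_2^-1 X_1 F_2, hence
   Tr_(1) (C_1 F_12 X_23 F^-1_12) = 1.  Writing matrix units through the skew
   relation Tr_(2) X_12 Psi_23 = P_13, this says Tr_(1) (C_1 F_12 M_2 F^-1_12)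
   = Tr(C M) 1 for every M, and skew invertibility of F then yields
   F^-1 C_1 = C_2 (P Psi_F P).  The second compatibility condition and the
   symmetry A |-> P A^T P, which exchanges C and D, give three companion
   relations; the six identities follow from these four by moving C's and D's
   across F and by cyclicity of partial traces. *)

Section DeltaSums.
Variable T : finType.

Lemma sum_delta_l (i : T) (f : T -> algC) : \sum_j (i == j)%:R * f j = f i.
Proof.
rewrite (bigD1 i) //= eqxx mul1r big1 ?addr0 // => j /negbTE.
by rewrite eq_sym => ->; rewrite mul0r.
Qed.

Lemma sum_delta_lC (i : T) (f : T -> algC) : \sum_j (j == i)%:R * f j = f i.
Proof. by rewrite -(sum_delta_l i); apply: eq_bigr => j _; rewrite eq_sym. Qed.

Lemma sum_delta_r (i : T) (f : T -> algC) : \sum_j f j * (i == j)%:R = f i.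
Proof. by rewrite -(sum_delta_l i); apply: eq_bigr => j _; rewrite mulrC. Qed.

Lemma sum_delta_rC (i : T) (f : T -> algC) : \sum_j f j * (j == i)%:R = f i.
Proof. by rewrite -(sum_delta_l i); apply: eq_bigr => j _; rewrite mulrC eq_sym. Qed.

Lemma sum_delta2 (x y : T) (G : T -> T -> algC) :
  \sum_a \sum_b G a b * ((a == x)%:R * (b == y)%:R) = G x y.
Proof.
rewrite -(sum_delta_lC x (fun a => G a y)); apply: eq_bigr => a _.
rewrite -(sum_delta_rC y (G a)) big_distrr /=.
by apply: eq_bigr => b _; ring.
Qed.

Lemma sum_delta2C (x y : T) (G : T -> T -> algC) :
  \sum_a \sum_b G a b * ((x == a)%:R * (y == b)%:R) = G x y.
Proof.
rewrite -(sum_delta2 x y); apply: eq_bigr => a _; apply: eq_bigr => b _.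
by rewrite (eq_sym x) (eq_sym y).
Qed.

Lemma sum_delta2Cr (x y : T) (G : T -> T -> algC) :
  \sum_a \sum_b G a b * ((a == x)%:R * (y == b)%:R) = G x y.
Proof.
rewrite -(sum_delta2 x y); apply: eq_bigr => a _; apply: eq_bigr => b _.
by rewrite (eq_sym y).
Qed.

Lemma sum_pair (U : finType) (f : T * U -> algC) : \sum_u f u = \sum_a \sum_b f (a, b).
Proof. by rewrite pair_bigA; apply: eq_bigr => -[]. Qed.

End DeltaSums.

(* Normalizing sums of products: [distr_sums] pushes every product inside all
   summations; [hoist_sum_at d k] moves the summation at depth [d + k] up to
   depth [d]; [congr_sums n] strips [n] common summations. *)
Ltac distr_sums := repeat progress (
  try rewrite big_distrr /=; try rewrite big_distrl /=;
  try (under eq_bigr => ? _ do distr_sums)).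
Ltac distr_sums_l := match goal with |- _ = ?r =>
  let x := fresh "r" in let e := fresh "e" in
  remember r as x eqn:e; distr_sums; subst x end.
Ltac distr_sums_r := symmetry; distr_sums_l; symmetry.
Ltac distr_sums_lr := distr_sums_l; distr_sums_r.

Ltac swap_sums_at n := match n with
  | O => rewrite exchange_big /=
  | S ?m => under eq_bigr => ? _ do swap_sums_at m end.
Ltac hoist_sum k := match k with
  | O => idtac
  | S ?m => swap_sums_at m; hoist_sum m end.
Ltac hoist_sum_at d k := match d with
  | O => hoist_sum k
  | S ?e => under eq_bigr => ? _ do hoist_sum_at e k end.
Ltac congr_sums n := match n with
  | O => idtac
  | S ?m => apply: eq_bigr => ? _; congr_sums m end.

Section TensorOperators.
Variable N : nat.
Local Notation I := 'I_N.
Local Notation Op2 := (Op (idx2 N)).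

Lemma sum_idx2 (f : idx2 N -> algC) : \sum_u f u = \sum_a \sum_b f (a, b).
Proof. exact: sum_pair. Qed.

Lemma sum_idx3 (f : idx3 N -> algC) : \sum_u f u = \sum_a \sum_b \sum_c f (a, b, c).
Proof. by rewrite /idx3 sum_pair (sum_pair (fun a => \sum_c f (a, c))). Qed.

Lemma op_ext (A B : Op2) :
  (forall i j k l, A (i, j) (k, l) = B (i, j) (k, l)) -> A = B.
Proof.
move=> eAB; apply: functional_extensionality => -[i j].
by apply: functional_extensionality => -[k l]; apply: eAB.
Qed.

Lemma opmulA (U : finType) (A B C : Op U) : opmul (opmul A B) C = opmul A (opmul B C).
Proof.
apply: functional_extensionality => i; apply: functional_extensionality => j.
rewrite /opmul; under eq_bigr do rewrite big_distrl /=.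
rewrite exchange_big /=; apply: eq_bigr => m _; rewrite big_distrr /=.
by apply: eq_bigr => k _; rewrite mulrA.
Qed.

Lemma opmul1l (U : finType) (A : Op U) : opmul (@opone U) A = A.
Proof.
apply: functional_extensionality => i; apply: functional_extensionality => j.
exact: sum_delta_l.
Qed.

Lemma opmul1r (U : finType) (A : Op U) : opmul A (@opone U) = A.
Proof.
apply: functional_extensionality => i; apply: functional_extensionality => j.
exact: sum_delta_rC.
Qed.

Lemma opmul_on12 (X : Op2) (M : Op (idx3 N)) i1 i2 i3 j :
  opmul (on12 X) M (i1, i2, i3) j
  = \sum_k1 \sum_k2 X (i1, i2) (k1, k2) * M (k1, k2, i3) j.
Proof.
rewrite /opmul sum_idx3; apply: eq_bigr => k1 _; apply: eq_bigr => k2 _.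
by rewrite /on12 /=; under eq_bigr do rewrite -mulrA; rewrite -big_distrr /= sum_delta_l.
Qed.

Lemma opmul_on23 (X : Op2) (M : Op (idx3 N)) i1 i2 i3 j :
  opmul (on23 X) M (i1, i2, i3) j
  = \sum_k2 \sum_k3 X (i2, i3) (k2, k3) * M (i1, k2, k3) j.
Proof.
rewrite /opmul sum_idx3 /on23 /=.
under eq_bigr do under eq_bigr do under eq_bigr do rewrite -!mulrA.
under eq_bigr do under eq_bigr do rewrite -big_distrr /=.
under eq_bigr do rewrite -big_distrr /=.
by rewrite sum_delta_l.
Qed.

Lemma on12_on23E (A B : Op2) i1 i2 i3 j1 j2 j3 :
  opmul (on12 A) (on23 B) (i1, i2, i3) (j1, j2, j3)
  = \sum_b A (i1, i2) (j1, b) * B (b, i3) (j2, j3).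
Proof.
rewrite opmul_on12 /on23 /= exchange_big /=; apply: eq_bigr => b _.
under eq_bigr do rewrite mulrCA.
by rewrite (sum_delta_lC j1 (fun a => A (i1, i2) (a, b) * B (b, i3) (j2, j3))).
Qed.

Lemma on23_on12E (A B : Op2) i1 i2 i3 j1 j2 j3 :
  opmul (on23 A) (on12 B) (i1, i2, i3) (j1, j2, j3)
  = \sum_b A (i2, i3) (b, j3) * B (i1, b) (j1, j2).
Proof.
rewrite opmul_on23 /on12 /=; apply: eq_bigr => b _.
by under eq_bigr do rewrite mulrA; rewrite sum_delta_rC.
Qed.

Lemma opmul_on1_l (C : Op I) (B : Op2) i j k l :
  opmul (on1 C) B (i, j) (k, l) = \sum_a C i a * B (a, j) (k, l).
Proof.
rewrite /opmul sum_idx2 /on1 /=; apply: eq_bigr => a _.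
by under eq_bigr do rewrite mulrAC; rewrite (sum_delta_r j (fun b => C i a * B (a, b) (k, l))).
Qed.

Lemma opmul_on1_r (A : Op2) (C : Op I) i j k l :
  opmul A (on1 C) (i, j) (k, l) = \sum_a A (i, j) (a, l) * C a k.
Proof.
rewrite /opmul sum_idx2 /on1 /=; apply: eq_bigr => a _.
by under eq_bigr do rewrite mulrA; rewrite (sum_delta_rC l (fun b => A (i, j) (a, b) * C a k)).
Qed.

Lemma opmul_on2_l (C : Op I) (B : Op2) i j k l :
  opmul (on2 C) B (i, j) (k, l) = \sum_b C j b * B (i, b) (k, l).
Proof.
rewrite /opmul sum_idx2 /on2 /= exchange_big /=; apply: eq_bigr => b _.
by under eq_bigr do rewrite -mulrA; rewrite (sum_delta_l i (fun a => C j b * B (a, b) (k, l))).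
Qed.

Lemma opmul_on2_r (A : Op2) (C : Op I) i j k l :
  opmul A (on2 C) (i, j) (k, l) = \sum_b A (i, j) (k, b) * C b l.
Proof.
rewrite /opmul sum_idx2 /on2 /= exchange_big /=; apply: eq_bigr => b _.
by under eq_bigr do rewrite mulrCA; rewrite (sum_delta_lC k (fun a => A (i, j) (a, b) * C b l)).
Qed.

Lemma on1M (A B : Op I) : on1 (opmul A B) = opmul (on1 A) (on1 B) :> Op2.
Proof.
apply: op_ext => i j k l; rewrite opmul_on1_r /on1 /opmul /= big_distrl /=.
by apply: eq_bigr => a _; rewrite mulrAC.
Qed.

Lemma on2M (A B : Op I) : on2 (opmul A B) = opmul (on2 A) (on2 B) :> Op2.
Proof.
apply: op_ext => i j k l; rewrite opmul_on2_l /on2 /opmul /= big_distrr /=.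
by apply: eq_bigr => a _; rewrite mulrCA.
Qed.

Lemma on1_on2C (A B : Op I) : opmul (on1 A) (on2 B) = opmul (on2 B) (on1 A) :> Op2.
Proof.
apply: op_ext => i j k l; rewrite opmul_on2_r opmul_on1_r /on1 /on2 /=.
under eq_bigr do rewrite mulrAC; rewrite (sum_delta_r j (fun b => A i k * B b l)).
under eq_bigr do rewrite mulrAC -mulrA.
by rewrite (sum_delta_l i (fun a => A a k * B j l)).
Qed.

End TensorOperators.

Section SkewInverse.
Variable N : nat.
Local Notation I := 'I_N.
Local Notation Op2 := (Op (idx2 N)).

Definition skew_eq1 (X Psi : Op2) := forall i j k l : I,
  \sum_a \sum_b X (i, a) (j, b) * Psi (b, k) (a, l) = (i == l)%:R * (k == j)%:R.
Definition skew_eq2 (X Psi : Op2) := forall i j k l : I,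
  \sum_a \sum_b Psi (i, a) (j, b) * X (b, k) (a, l) = (i == l)%:R * (k == j)%:R.
Definition inv_eq (A B : Op2) := forall i j k l : I,
  \sum_a \sum_c A (i, j) (a, c) * B (a, c) (k, l) = (i == k)%:R * (j == l)%:R.
Definition compat_eq1 (X F : Op2) := forall i1 i2 i3 j1 j2 j3 : I,
  \sum_k1 \sum_k2 X (i1, i2) (k1, k2) * \sum_b (F (k2, i3) (b, j3) * F (k1, b) (j1, j2))
  = \sum_k2 \sum_k3 F (i2, i3) (k2, k3) * \sum_b (F (i1, k2) (j1, b) * X (b, k3) (j2, j3)).
Definition compat_eq2 (X F : Op2) := forall i1 i2 i3 j1 j2 j3 : I,
  \sum_k2 \sum_k3 X (i2, i3) (k2, k3) * \sum_b (F (i1, k2) (j1, b) * F (b, k3) (j2, j3))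
  = \sum_k1 \sum_k2 F (i1, i2) (k1, k2) * \sum_b (F (k2, i3) (b, j3) * X (k1, b) (j1, j2)).

Lemma skew_inverseE (X Psi : Op2) :
  skew_inverse X Psi -> skew_eq1 X Psi /\ skew_eq2 X Psi.
Proof.
case=> e1 e2; split=> i j k l.
  have := congr1 (fun M => M (i, k) (j, l)) e1.
  rewrite /ptr2_3 /flip /= -mulnb natrM => <-.
  by apply: eq_bigr => a _; rewrite on12_on23E.
have := congr1 (fun M => M (i, k) (j, l)) e2.
rewrite /ptr2_3 /flip /= -mulnb natrM => <-.
by apply: eq_bigr => a _; rewrite on12_on23E.
Qed.

Lemma opmul_inv_eq (A B : Op2) : opmul A B = @opone (idx2 N) -> inv_eq A B.
Proof.
move=> eAB i j k l; have := congr1 (fun M => M (i, j) (k, l)) eAB.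
by rewrite /opmul /opone /= sum_idx2 xpair_eqE -mulnb natrM.
Qed.

Lemma compatibleE (X F : Op2) : compatible X F -> compat_eq1 X F /\ compat_eq2 X F.
Proof.
case=> e1 e2; split=> i1 i2 i3 j1 j2 j3.
  have := congr1 (fun M => M (i1, i2, i3) (j1, j2, j3)) e1.
  rewrite opmul_on12 opmul_on23 => e.
  transitivity (\sum_k1 \sum_k2 X (i1, i2) (k1, k2) *
      opmul (on23 F) (on12 F) (k1, k2, i3) (j1, j2, j3)).
    by congr_sums 2%N; rewrite on23_on12E.
  by rewrite e; congr_sums 2%N; rewrite on12_on23E.
have := congr1 (fun M => M (i1, i2, i3) (j1, j2, j3)) e2.
rewrite opmul_on12 opmul_on23 => e.
transitivity (\sum_k2 \sum_k3 X (i2, i3) (k2, k3) *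
    opmul (on12 F) (on23 F) (i1, k2, k3) (j1, j2, j3)).
  by congr_sums 2%N; rewrite on12_on23E.
by rewrite e; congr_sums 2%N; rewrite on23_on12E.
Qed.

Lemma trace1_Cop_mul (X Psi : Op2) : skew_eq2 X Psi -> forall p b : I,
  \sum_x \sum_y Cop Psi x y * X (y, p) (x, b) = (p == b)%:R.
Proof.
move=> sk p b.
transitivity (\sum_a \sum_x \sum_y Psi (a, x) (a, y) * X (y, p) (x, b)).
  by distr_sums_lr; hoist_sum 2%N; congr_sums 3%N; ring.
under eq_bigr => a _ do rewrite sk.
by rewrite (sum_delta_lC b (fun a => (p == a)%:R)).
Qed.

(* Tr_(1) (C_1 A_12 X_23 B_12), where C = Tr_(1) Psi. *)
Definition conj_trace (X A B Psi : Op2) : Op2 := fun u v =>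
  \sum_x \sum_y \sum_a \sum_b \sum_c
    Cop Psi x y * A (y, u.1) (a, b) * X (b, u.2) (c, v.2) * B (a, c) (x, v.1).

Section ConjTrace.
Variables X A B Psi : Op2.
Hypotheses (sk2 : skew_eq2 X Psi) (AB : inv_eq A B).

(* Compatibility moves A_12 across X_23 B_12, and what remains is
   A Tr_(1) (C_1 X_12) = A by [trace1_Cop_mul]. *)
Lemma opmul_conj_trace (cpt : compat_eq1 X A) : opmul A (conj_trace X A B Psi) = A.
Proof.
apply: op_ext => p q j2 j3; rewrite /opmul sum_idx2 /conj_trace /=.
transitivity (\sum_x \sum_y \sum_a \sum_c (Cop Psi x y * B (a, c) (x, j2)) *
  (\sum_k2 \sum_k3 A (p, q) (k2, k3) * \sum_b (A (y, k2) (a, b) * X (b, k3) (c, j3)))).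
  distr_sums_lr; hoist_sum 2%N; hoist_sum_at 1%N 2%N; hoist_sum_at 2%N 2%N.
  by hoist_sum_at 3%N 3%N; hoist_sum_at 6%N 1%N; congr_sums 8%N; ring.
under eq_bigr => x _ do under eq_bigr => y _ do under eq_bigr => a _ do
  under eq_bigr => c _ do rewrite -cpt.
transitivity (\sum_x \sum_y \sum_k2 \sum_k1 \sum_b
  (Cop Psi x y * X (y, p) (k1, k2) * A (k2, q) (b, j3)) *
  (\sum_a \sum_c A (k1, b) (a, c) * B (a, c) (x, j2))).
  distr_sums_lr; hoist_sum_at 2%N 3%N; hoist_sum_at 3%N 2%N; hoist_sum_at 4%N 3%N.
  by congr_sums 8%N; ring.
under eq_bigr => x _ do under eq_bigr => y _ do under eq_bigr => k2 _ do
  under eq_bigr => k1 _ do under eq_bigr => b _ do rewrite AB.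
under eq_bigr => x _ do under eq_bigr => y _ do under eq_bigr => k2 _ do
  rewrite sum_delta2.
transitivity (\sum_k2 (\sum_x \sum_y Cop Psi x y * X (y, p) (x, k2)) * A (k2, q) (j2, j3)).
  by distr_sums_lr; hoist_sum 2%N; congr_sums 4%N; ring.
by under eq_bigr => k2 _ do rewrite (trace1_Cop_mul sk2); rewrite sum_delta_l.
Qed.

Lemma conj_trace_opmul (cpt : compat_eq2 X B) : opmul (conj_trace X A B Psi) B = B.
Proof.
apply: op_ext => i2 i3 j2 j3; rewrite /opmul sum_idx2 /conj_trace /=.
transitivity (\sum_x \sum_y \sum_a \sum_b (Cop Psi x y * A (y, i2) (a, b)) *
  (\sum_k2 \sum_k3 X (b, i3) (k2, k3) * \sum_b' (B (a, k2) (x, b') * B (b', k3) (j2, j3)))).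
  distr_sums_lr; hoist_sum 2%N; hoist_sum_at 1%N 2%N; hoist_sum_at 2%N 2%N.
  hoist_sum_at 3%N 2%N; hoist_sum_at 4%N 2%N; hoist_sum_at 5%N 1%N.
  by hoist_sum_at 6%N 1%N; congr_sums 8%N; ring.
under eq_bigr => x _ do under eq_bigr => y _ do under eq_bigr => a _ do
  under eq_bigr => b _ do rewrite cpt.
transitivity (\sum_x \sum_y \sum_b'' \sum_k1 \sum_k2
  (Cop Psi x y * B (k2, i3) (b'', j3) * X (k1, b'') (x, j2)) *
  (\sum_a \sum_b A (y, i2) (a, b) * B (a, b) (k1, k2))).
  distr_sums_lr; hoist_sum_at 2%N 5%N; hoist_sum_at 3%N 2%N; hoist_sum_at 4%N 2%N.
  by congr_sums 8%N; ring.
under eq_bigr => x _ do under eq_bigr => y _ do under eq_bigr => b _ do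
  under eq_bigr => k1 _ do under eq_bigr => k2 _ do rewrite AB.
under eq_bigr => x _ do under eq_bigr => y _ do under eq_bigr => b _ do
  rewrite sum_delta2C.
transitivity (\sum_b (\sum_x \sum_y Cop Psi x y * X (y, b) (x, j2)) * B (i2, i3) (b, j3)).
  by distr_sums_lr; hoist_sum 2%N; congr_sums 4%N; ring.
by under eq_bigr => b _ do rewrite (trace1_Cop_mul sk2); rewrite sum_delta_lC.
Qed.

End ConjTrace.

Lemma conj_trace1 (X F G Psi : Op2) :
  skew_eq2 X Psi -> compat_eq1 X F ->
  opmul F G = @opone (idx2 N) -> opmul G F = @opone (idx2 N) ->
  conj_trace X F G Psi = @opone (idx2 N).
Proof.
move=> sk cpt FG GF.
by rewrite -[LHS]opmul1l -GF opmulA opmul_conj_trace //; apply: opmul_inv_eq.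
Qed.

Lemma conj_trace1_inv (X F G Psi : Op2) :
  skew_eq2 X Psi -> compat_eq2 X F ->
  opmul F G = @opone (idx2 N) -> opmul G F = @opone (idx2 N) ->
  conj_trace X G F Psi = @opone (idx2 N).
Proof.
move=> sk cpt FG GF.
by rewrite -[LHS]opmul1r -FG -opmulA conj_trace_opmul //; apply: opmul_inv_eq.
Qed.

(* Writing the matrix unit E_(j4,i4) as a partial trace of X_12 Psi_23 turns
   [conj_trace X A B Psi = 1] into Tr_(1) (C_1 A_12 (E_(j4,i4))_2 B_12) = C(i4,j4) 1. *)
Lemma conj_trace_unit (X A B Psi : Op2) :
  conj_trace X A B Psi = @opone (idx2 N) -> skew_eq1 X Psi ->
  forall i2 j2 i4 j4 : I,
  \sum_x \sum_y \sum_a Cop Psi x y * A (y, i2) (a, j4) * B (a, i4) (x, j2)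
  = Cop Psi i4 j4 * (i2 == j2)%:R.
Proof.
move=> W1 sk i2 j2 i4 j4.
transitivity (\sum_x \sum_y \sum_a \sum_b \sum_c
  (Cop Psi x y * A (y, i2) (a, b) * B (a, c) (x, j2)) * ((b == j4)%:R * (i4 == c)%:R)).
  by under [RHS]eq_bigr => x _ do under eq_bigr => y _ do under eq_bigr => a _ do
    rewrite sum_delta2Cr.
transitivity (\sum_x \sum_y \sum_a \sum_b \sum_c
  (Cop Psi x y * A (y, i2) (a, b) * B (a, c) (x, j2)) *
  (\sum_i3 \sum_j3 X (b, i3) (c, j3) * Psi (j3, i4) (i3, j4))).
  by under [RHS]eq_bigr => x _ do under eq_bigr => y _ do under eq_bigr => a _ do
    under eq_bigr => b _ do under eq_bigr => c _ do rewrite sk.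
transitivity (\sum_i3 \sum_j3 conj_trace X A B Psi (i2, i3) (j2, j3) * Psi (j3, i4) (i3, j4)).
  rewrite /conj_trace /=; distr_sums_lr; hoist_sum 5%N; hoist_sum_at 1%N 5%N.
  by congr_sums 8%N; ring.
rewrite W1 /opone /=.
under eq_bigr => i3 _ do under eq_bigr => j3 _ do rewrite xpair_eqE -mulnb natrM -mulrA.
under eq_bigr => i3 _ do rewrite -big_distrr /= (sum_delta_l i3 (fun j3 => Psi (j3, i4) (i3, j4))).
by rewrite -big_distrr /= mulrC.
Qed.

End SkewInverse.

Section KeyRelations.
Variable N : nat.
Local Notation I := 'I_N.
Local Notation Op2 := (Op (idx2 N)).

(* In operator form: G C_1 = C_2 (P Phi P). *)
Lemma trace_unit_slide_l (F G Phi : Op2) (C : Op I) :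
  (forall i2 j2 i4 j4 : I,
    \sum_x \sum_y \sum_a C x y * F (y, i2) (a, j4) * G (a, i4) (x, j2)
    = C i4 j4 * (i2 == j2)%:R) ->
  skew_eq1 F Phi -> forall k i4 j2 l : I,
  \sum_x G (k, i4) (x, j2) * C x l = \sum_b C i4 b * Phi (b, k) (j2, l).
Proof.
move=> unit sk k i4 j2 l.
transitivity (\sum_x \sum_y \sum_a
  (C x y * G (a, i4) (x, j2)) * ((y == l)%:R * (k == a)%:R)).
  by symmetry; under eq_bigr => x _ do rewrite sum_delta2Cr; apply: eq_bigr => x _; rewrite mulrC.
transitivity (\sum_x \sum_y \sum_a (C x y * G (a, i4) (x, j2)) *
  (\sum_i2 \sum_j4 F (y, i2) (a, j4) * Phi (j4, k) (i2, l))).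
  by symmetry; under eq_bigr => x _ do under eq_bigr => y _ do under eq_bigr => a _ do
    rewrite sk.
transitivity (\sum_i2 \sum_j4
  (\sum_x \sum_y \sum_a C x y * F (y, i2) (a, j4) * G (a, i4) (x, j2)) * Phi (j4, k) (i2, l)).
  by distr_sums_lr; hoist_sum 3%N; hoist_sum_at 1%N 3%N; congr_sums 5%N; ring.
under eq_bigr => i2 _ do under eq_bigr => j4 _ do rewrite unit.
rewrite exchange_big /=; under eq_bigr => j4 _ do under eq_bigr => i2 _ do rewrite mulrAC.
by under eq_bigr => j4 _ do rewrite (sum_delta_rC j2 (fun i2 => C i4 j4 * Phi (j4, k) (i2, l))).
Qed.

(* In operator form: C_1 G = (P Phi P) C_2. *)
Lemma trace_unit_slide_r (F G Phi : Op2) (C : Op I) :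
  (forall i2 j2 i4 j4 : I,
    \sum_x \sum_y \sum_a C x y * G (y, i2) (a, j4) * F (a, i4) (x, j2)
    = C i4 j4 * (i2 == j2)%:R) ->
  skew_eq1 F Phi -> forall k i2 l j4 : I,
  \sum_y C k y * G (y, i2) (l, j4) = \sum_b Phi (i2, k) (b, l) * C b j4.
Proof.
move=> unit sk k i2 l j4.
transitivity (\sum_y \sum_a \sum_x
  (C x y * G (y, i2) (a, j4)) * ((a == l)%:R * (k == x)%:R)).
  by symmetry; under eq_bigr => y _ do rewrite sum_delta2Cr.
transitivity (\sum_y \sum_a \sum_x (C x y * G (y, i2) (a, j4)) *
  (\sum_i4 \sum_j2 F (a, i4) (x, j2) * Phi (j2, k) (i4, l))).
  by symmetry; under eq_bigr => y _ do under eq_bigr => a _ do under eq_bigr => x _ do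
    rewrite sk.
transitivity (\sum_i4 \sum_j2
  (\sum_x \sum_y \sum_a C x y * G (y, i2) (a, j4) * F (a, i4) (x, j2)) * Phi (j2, k) (i4, l)).
  distr_sums_lr; hoist_sum 3%N; hoist_sum_at 1%N 3%N; hoist_sum_at 2%N 2%N.
  by congr_sums 5%N; ring.
under eq_bigr => i4 _ do under eq_bigr => j2 _ do rewrite unit mulrAC.
under eq_bigr => i4 _ do rewrite (sum_delta_r i2 (fun j2 => C i4 j4 * Phi (j2, k) (i4, l))).
by apply: eq_bigr => b _; rewrite mulrC.
Qed.

(* P A^T P; this involution exchanges the roles of C and D. *)
Definition flip_transpose (A : Op2) : Op2 := fun u v => A (v.2, v.1) (u.2, u.1).

Definition flip_conj (A : Op2) : Op2 := fun u v => A (u.2, u.1) (v.2, v.1).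

Lemma flip_transposeM (A B : Op2) :
  opmul (flip_transpose A) (flip_transpose B) = flip_transpose (opmul B A).
Proof.
apply: op_ext => i j k l; rewrite /opmul /flip_transpose !sum_idx2 /= exchange_big /=.
by congr_sums 2%N; rewrite mulrC.
Qed.

Lemma flip_transpose1 : flip_transpose (@opone (idx2 N)) = @opone (idx2 N).
Proof. by apply: op_ext => i j k l; rewrite /flip_transpose /opone /= !xpair_eqE andbC eq_sym (eq_sym j). Qed.

Lemma skew_eq1_flip_transpose (X Psi : Op2) :
  skew_eq2 X Psi -> skew_eq1 (flip_transpose X) (flip_transpose Psi).
Proof.
move=> sk i j k l; rewrite /flip_transpose /=.
under eq_bigr do under eq_bigr do rewrite mulrC.
by rewrite sk (eq_sym l) (eq_sym j).
Qed.

Lemma skew_eq2_flip_transpose (X Psi : Op2) :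
  skew_eq1 X Psi -> skew_eq2 (flip_transpose X) (flip_transpose Psi).
Proof.
move=> sk i j k l; rewrite /flip_transpose /=.
under eq_bigr do under eq_bigr do rewrite mulrC.
by rewrite sk (eq_sym l) (eq_sym j).
Qed.

Lemma compat_eq1_flip_transpose (X F : Op2) :
  compat_eq1 X F -> compat_eq1 (flip_transpose X) (flip_transpose F).
Proof.
move=> cpt i1 i2 i3 j1 j2 j3; rewrite /flip_transpose /=.
transitivity (\sum_k2 \sum_k3 F (j2, j1) (k2, k3) *
  \sum_b (F (j3, k2) (i3, b) * X (b, k3) (i2, i1))).
  by distr_sums_lr; hoist_sum 2%N; congr_sums 3%N; ring.
by rewrite -cpt; distr_sums_lr; hoist_sum 2%N; congr_sums 3%N; ring.
Qed.

Lemma compat_eq2_flip_transpose (X F : Op2) :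
  compat_eq2 X F -> compat_eq2 (flip_transpose X) (flip_transpose F).
Proof.
move=> cpt i1 i2 i3 j1 j2 j3; rewrite /flip_transpose /=.
transitivity (\sum_k1 \sum_k2 F (j3, j2) (k1, k2) *
  \sum_b (F (k2, j1) (b, i1) * X (k1, b) (i3, i2))).
  by distr_sums_lr; hoist_sum 1%N; hoist_sum_at 1%N 1%N; congr_sums 3%N; ring.
by rewrite -cpt; distr_sums_lr; hoist_sum 1%N; hoist_sum_at 1%N 1%N; congr_sums 3%N; ring.
Qed.

Variables X F G Psi Phi : Op2.
Hypotheses (skX : skew_inverse X Psi) (skF : skew_inverse F Phi)
  (FG : opmul F G = @opone (idx2 N)) (GF : opmul G F = @opone (idx2 N))
  (cpt : compatible X F).

Let FG_T : opmul (flip_transpose G) (flip_transpose F) = @opone (idx2 N).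
Proof. by rewrite flip_transposeM FG flip_transpose1. Qed.
Let GF_T : opmul (flip_transpose F) (flip_transpose G) = @opone (idx2 N).
Proof. by rewrite flip_transposeM GF flip_transpose1. Qed.

Lemma Finv_on1_Cop : opmul G (on1 (Cop Psi)) = opmul (on2 (Cop Psi)) (flip_conj Phi).
Proof.
have [[sk1 sk2] [skF1 _]] := (skew_inverseE skX, skew_inverseE skF).
have [cpt1 _] := compatibleE cpt.
have := trace_unit_slide_l (conj_trace_unit (conj_trace1 sk2 cpt1 FG GF) sk1) skF1.
by move=> slide; apply: op_ext => i j k l; rewrite opmul_on1_r opmul_on2_l slide.
Qed.

Lemma on1_Cop_Finv : opmul (on1 (Cop Psi)) G = opmul (flip_conj Phi) (on2 (Cop Psi)).
Proof.
have [[sk1 sk2] [skF1 _]] := (skew_inverseE skX, skew_inverseE skF).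
have [_ cpt2] := compatibleE cpt.
have := trace_unit_slide_r (conj_trace_unit (conj_trace1_inv sk2 cpt2 FG GF) sk1) skF1.
by move=> slide; apply: op_ext => i j k l; rewrite opmul_on1_l opmul_on2_r slide.
Qed.

Lemma on2_Dop_Finv : opmul (on2 (Dop Psi)) G = opmul (flip_conj Phi) (on1 (Dop Psi)).
Proof.
have [[sk1 sk2] [_ skF2]] := (skew_inverseE skX, skew_inverseE skF).
have [cpt1 _] := compatibleE cpt.
have W1 := conj_trace1 (skew_eq2_flip_transpose sk1) (compat_eq1_flip_transpose cpt1) GF_T FG_T.
have := trace_unit_slide_l (conj_trace_unit W1 (skew_eq1_flip_transpose sk2))
  (skew_eq1_flip_transpose skF2).
move=> slide; apply: op_ext => p q r s; rewrite opmul_on1_r opmul_on2_l.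
have := slide s r p q; rewrite /flip_transpose /Cop /Dop /ptr1 /ptr2 /= => e.
by under eq_bigr do rewrite mulrC; rewrite e; apply: eq_bigr => b _; rewrite mulrC.
Qed.

Lemma Finv_on2_Dop : opmul G (on2 (Dop Psi)) = opmul (on1 (Dop Psi)) (flip_conj Phi).
Proof.
have [[sk1 sk2] [_ skF2]] := (skew_inverseE skX, skew_inverseE skF).
have [_ cpt2] := compatibleE cpt.
have W1 := conj_trace1_inv (skew_eq2_flip_transpose sk1) (compat_eq2_flip_transpose cpt2)
  GF_T FG_T.
have := trace_unit_slide_r (conj_trace_unit W1 (skew_eq1_flip_transpose sk2))
  (skew_eq1_flip_transpose skF2).
move=> slide; apply: op_ext => p q r s; rewrite opmul_on1_l opmul_on2_r.
have := slide s r q p; rewrite /flip_transpose /Cop /Dop /ptr1 /ptr2 /= => e.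
by under eq_bigr do rewrite mulrC; rewrite e; apply: eq_bigr => b _; rewrite mulrC.
Qed.

End KeyRelations.

Section Traces.
Variable N : nat.
Local Notation I := 'I_N.
Local Notation Op2 := (Op (idx2 N)).

Lemma ptr1_on1_mulC (A : Op I) (B : Op2) : ptr1 (opmul (on1 A) B) = ptr1 (opmul B (on1 A)).
Proof.
apply: functional_extensionality => i; apply: functional_extensionality => j.
rewrite /ptr1; under eq_bigr do rewrite opmul_on1_l.
under [RHS]eq_bigr do rewrite opmul_on1_r.
by rewrite exchange_big /=; congr_sums 2%N; rewrite mulrC.
Qed.

Lemma ptr2_on2_mulC (A : Op I) (B : Op2) : ptr2 (opmul (on2 A) B) = ptr2 (opmul B (on2 A)).
Proof.
apply: functional_extensionality => i; apply: functional_extensionality => j.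
rewrite /ptr2; under eq_bigr do rewrite opmul_on2_l.
under [RHS]eq_bigr do rewrite opmul_on2_r.
by rewrite exchange_big /=; congr_sums 2%N; rewrite mulrC.
Qed.

Lemma ptr1_on2_flip_conj (C : Op I) (Phi : Op2) :
  ptr1 (opmul (on2 C) (flip_conj Phi)) = opmul C (Dop Phi).
Proof.
apply: functional_extensionality => i; apply: functional_extensionality => j.
rewrite /ptr1; under eq_bigr do rewrite opmul_on2_l /flip_conj /=.
by rewrite /opmul /Dop /ptr2 exchange_big /=; apply: eq_bigr => b _; rewrite big_distrr.
Qed.

Lemma ptr1_flip_conj_on2 (C : Op I) (Phi : Op2) :
  ptr1 (opmul (flip_conj Phi) (on2 C)) = opmul (Dop Phi) C.
Proof.
apply: functional_extensionality => i; apply: functional_extensionality => j.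
rewrite /ptr1; under eq_bigr do rewrite opmul_on2_r /flip_conj /=.
by rewrite /opmul /Dop /ptr2 exchange_big /=; apply: eq_bigr => b _; rewrite big_distrl.
Qed.

Lemma ptr2_flip_conj_on1 (D : Op I) (Phi : Op2) :
  ptr2 (opmul (flip_conj Phi) (on1 D)) = opmul (Cop Phi) D.
Proof.
apply: functional_extensionality => i; apply: functional_extensionality => j.
rewrite /ptr2; under eq_bigr do rewrite opmul_on1_r /flip_conj /=.
by rewrite /opmul /Cop /ptr1 exchange_big /=; apply: eq_bigr => b _; rewrite big_distrl.
Qed.

Lemma ptr2_on1_flip_conj (D : Op I) (Phi : Op2) :
  ptr2 (opmul (on1 D) (flip_conj Phi)) = opmul D (Cop Phi).
Proof.
apply: functional_extensionality => i; apply: functional_extensionality => j.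
rewrite /ptr2; under eq_bigr do rewrite opmul_on1_l /flip_conj /=.
by rewrite /opmul /Cop /ptr1 exchange_big /=; apply: eq_bigr => b _; rewrite big_distrr.
Qed.

End Traces.

Lemma opmul_canRL_l (U : finType) (F G A B : Op U) :
  opmul F G = @opone U -> opmul G A = B -> A = opmul F B.
Proof. by move=> FG <-; rewrite -opmulA FG opmul1l. Qed.

Lemma opmul_canRL_r (U : finType) (F G A B : Op U) :
  opmul G F = @opone U -> opmul A G = B -> A = opmul B F.
Proof. by move=> GF <-; rewrite opmulA GF opmul1r. Qed.

Unset Implicit Arguments.

Theorem corollary3p4 (N : nat) (X Y F PsiX PsiY PsiF Finv : Op (idx2 N)) :
  skew_inverse X PsiX -> skew_inverse Y PsiY -> skew_inverse F PsiF ->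
  opmul F Finv = @opone (idx2 N) -> opmul Finv F = @opone (idx2 N) ->
  compatible X F -> compatible Y F ->
  let CX := Cop PsiX in let DX := Dop PsiX in
  let CY := Cop PsiY in let DY := Dop PsiY in
  let CF := Cop PsiF in let DF := Dop PsiF in
  (opmul F (opmul (on1 CX) (on2 CY)) = opmul (on1 CY) (opmul (on2 CX) F)
   /\ opmul F (opmul (on1 DX) (on2 DY)) = opmul (on1 DY) (opmul (on2 DX) F)
   /\ opmul F (on2 (opmul CX DY)) = opmul (on1 (opmul CX DY)) F
   /\ opmul F (on1 (opmul DY CX)) = opmul (on2 (opmul DY CX)) F
   /\ (ptr1 (opmul (on1 CX) Finv) = opmul CX DF /\ opmul CX DF = opmul DF CX)
   /\ (ptr2 (opmul (on2 DX) Finv) = opmul CF DX /\ opmul CF DX = opmul DX CF)).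
Proof.
move=> skX skY skF FG GF cpX cpY; cbv zeta.
have CX_l := Finv_on1_Cop skX skF FG GF cpX; have CY_l := Finv_on1_Cop skY skF FG GF cpY.
have CX_r := on1_Cop_Finv skX skF FG GF cpX.
have DX_l := Finv_on2_Dop skX skF FG GF cpX; have DY_l := Finv_on2_Dop skY skF FG GF cpY.
have DX_r := on2_Dop_Finv skX skF FG GF cpX; have DY_r := on2_Dop_Finv skY skF FG GF cpY.
split.
  rewrite on1_on2C (opmul_canRL_r GF CX_r) (opmul_canRL_l FG CY_l).
  by rewrite -!opmulA.
split.
  rewrite -!opmulA on1_on2C (opmul_canRL_r GF DY_r) (opmul_canRL_l FG DX_l).
  by rewrite -!opmulA.
split.
  rewrite on2M on1M (opmul_canRL_r GF DY_r) (opmul_canRL_l FG CX_l).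
  by rewrite -!opmulA.
split.
  rewrite on1M on2M (opmul_canRL_r GF CX_r) (opmul_canRL_l FG DY_l).
  by rewrite -!opmulA.
split.
  split; first by rewrite ptr1_on1_mulC CX_l ptr1_on2_flip_conj.
  by rewrite -ptr1_on2_flip_conj -CX_l -ptr1_on1_mulC CX_r ptr1_flip_conj_on2.
split; first by rewrite DX_r ptr2_flip_conj_on1.
by rewrite -ptr2_flip_conj_on1 -DX_r ptr2_on2_mulC DX_l ptr2_on1_flip_conj.
Qed.
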